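(* $\mathfrak{s}(2^\omega)$ is uncountable.
   Context: For infinite sets $U, A$, say $U$ splits $A$ if both $A\cap U$ and $A\setminus U$ are infinite. For a topological space $X$, $\mathfrak{s}(X)$ is the smallest cardinality of a family $\mathcal{U}$ of open subsets of $X$ such that every infinite $A\subseteq X$ is split by some $U\in\mathcal{U}$. $2^\omega$ is the Cantor space. *)

From HB Require Import structures.
From mathcomp Require Import all_boot all_order all_algebra.
From mathcomp Require Import all_classical all_reals all_analysis.
Set Implicit Arguments. Unset Strict Implicit. Unset Printing Implicit Defensive.
Local Open Scope classical_set_scope.

Definition splits {T : Type} (U A : set T) : Prop :=
  infinite_set (A `&` U) /\ infinite_set (A `\` U).

Definition splitting_open_family (X : topologicalType) (F : set (set X)) : Prop :=
  (forall U, F U -> open U) /\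
  (forall A : set X, infinite_set A -> exists2 U, F U & splits U A).

From mathcomp Require Import all_boot all_order all_algebra.
From mathcomp Require Import all_classical all_reals all_analysis.
Local Open Scope classical_set_scope.

(* A countable family (U_n) never splits every infinite set: refine the whole
   space to a decreasing chain of infinite sets with W_(n+1) inside U_n or
   disjoint from it; an infinite pseudo-intersection of the chain is almost
   contained in W_(n+1), hence split by no U_n.
   Open splitting families exist because in a Hausdorff space every infinite
   set A is split by an open set.  Otherwise, of two disjoint neighbourhoods of
   distinct points of A one meets A in a finite set, so all but at most one
   point of A are isolated in A; the union of isolating neighbourhoods of every
   other point of an infinite sequence of isolated points then splits A. *)

Lemma infinite_setP {T} (A : set T) :
  infinite_set A <-> exists2 f : nat -> T, (forall n, A (f n)) & injective f.
Proof.
elim/Ppointed: T => T in A *.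
  by rewrite emptyE; split=> [/(_ (finite_set0 _))|[f /(_ 0%N)]].
split=> [/infiniteP/pcard_leP/injfunPex[f Af fi]|[f Af fi]].
  by exists f => [n|m n]; [exact: Af | apply: fi; rewrite in_setT].
by apply/infiniteP/pcard_leP/injfunPex; exists f => // m n _ _; exact: fi.
Qed.

Lemma infinite_setI_or_setD {T} (A U : set T) :
  infinite_set A -> infinite_set (A `&` U) \/ infinite_set (A `\` U).
Proof.
move=> Ainf; apply/not_andP => -[AUfin ADfin]; apply: Ainf.
by rewrite -(setUIDK A U) finite_setU.
Qed.

Lemma infinite_injective_choice {T} (W : nat -> set T) :
  (forall n, infinite_set (W n)) ->
  exists2 a : nat -> T, (forall n, W n (a n)) & injective a.
Proof.
move=> Winf; have [x0 _] := infinite_setN0 (Winf 0%N).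
have /choice[fresh freshP] : forall nS : nat * set T, exists x,
    finite_set nS.2 -> W nS.1 x /\ ~ nS.2 x.
  move=> [n S] /=; have [Sfin|] := pselect (finite_set S); last by exists x0.
  by have [x] := infinite_setN0 (infinite_setD (Winf n) Sfin); exists x.
pose used := fix used n := if n is m.+1 then used m `|` [set fresh (m, used m)]
                          else set0.
pose a n := fresh (n, used n).
have used_fin n : finite_set (used n).
  by elim: n => //= n IH; rewrite finite_setU; split=> //; exact: finite_set1.
have aP n : W n (a n) /\ ~ used n (a n) := freshP (n, used n) (used_fin n).
have used_a m n : (m < n)%N -> used n (a m).
  by elim: n => // n IH; rewrite ltnS leq_eqVlt => /predU1P[->|/IH]; [right|left].
exists a; first by move=> n; exact: (aP n).1.
move=> m n amn; wlog mn : m n amn / (m < n)%N.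
  move=> sym; case: (ltngtP m n) => [|nm|//]; first exact: sym.
  exact/esym/sym.
by case: (aP n).2; rewrite -amn; exact: used_a.
Qed.

Lemma pseudo_intersection_nonincreasing {T} (W : nat -> set T) :
  (forall n, infinite_set (W n)) -> nonincreasing_seq W ->
  exists2 A, infinite_set A & forall n, finite_set (A `\` W n).
Proof.
move=> Winf Wdecr; have [a Wa ainj] := infinite_injective_choice _ Winf.
exists (range a); first by apply/infinite_setP; exists a => // n; exists n.
move=> n; apply: sub_finite_set (finite_image a (finite_II n)).
move=> _ [[k _ <-] nWak]; exists k => //=; rewrite ltnNge; apply/negP => nk.
by apply: nWak; have /subsetPset := Wdecr _ _ nk; apply; exact: Wa.
Qed.

Lemma almost_sub_not_splits {T} (A U W : set T) :
  finite_set (A `\` W) -> W `<=` U \/ W `<=` ~` U -> ~ splits U A.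
Proof.
move=> AWfin [WU|WUc] [AUinf ADinf].
  by apply: ADinf; apply: sub_finite_set AWfin => x [Ax nUx]; split=> // /WU.
by apply: AUinf; apply: sub_finite_set AWfin => x [Ax Ux]; split=> // /WUc.
Qed.

Lemma seq_not_splitting {T} (u : nat -> set T) : infinite_set [set: T] ->
  exists2 A, infinite_set A & forall n, ~ splits (u n) A.
Proof.
move=> Tinf; have /choice[step stepP] : forall nW : nat * set T, exists W',
    infinite_set nW.2 -> [/\ W' `<=` nW.2, infinite_set W' &
                             W' `<=` u nW.1 \/ W' `<=` ~` u nW.1].
  move=> [n W] /=; have [Winf|] := pselect (infinite_set W); last by exists W.
  have [WUinf|WDinf] := infinite_setI_or_setD W (u n) Winf.
    by exists (W `&` u n) => _; split; [exact: subIsetl|exact: WUinf|left=> x []].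
  by exists (W `\` u n) => _; split; [move=> x []|exact: WDinf|right=> x []].
pose W := fix W n := if n is m.+1 then step (m, W m) else setT.
have Winf n : infinite_set (W n).
  by elim: n => //= n IH; have [] := stepP (n, W n) IH.
have WS n := stepP (n, W n) (Winf n).
have Wdecr : nonincreasing_seq W.
  by apply/nonincreasing_seqP => n; apply/subsetPset; have [] := WS n.
have [A Ainf AW] := pseudo_intersection_nonincreasing _ Winf Wdecr.
exists A => // n; have [_ _] := WS n; exact: almost_sub_not_splits (AW n.+1).
Qed.

Lemma open_split_isolated {T : topologicalType} (A : set T) :
  infinite_set (isolated A) -> exists2 U, open U & splits U A.
Proof.
move=> /infinite_setP[s isos sinj].
have sA n : A (s n) by have [/set_mem] := isos n.
have /choice[V VP] : forall n, exists V,
    [/\ open V, V (s n) & V `&` A `<=` [set s n]].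
  move=> n; have [_ [N]] := isos n; rewrite nbhsE => -[V [oV Vs] VN] NA.
  by exists V; split=> // x [Vx Ax]; rewrite -NA; split=> //; exact: VN.
exists (\bigcup_k V k.*2); first by apply: bigcup_open => k _; case: (VP k.*2).
split.
  apply/infinite_setP; exists (fun k => s k.*2) => [k|m n /sinj/double_inj//].
  by split; [exact: sA|exists k => //; case: (VP k.*2)].
apply/infinite_setP; exists (fun k => s k.*2.+1) => [k|m n /sinj[]/double_inj//].
split=> [|[j _ Vjs]]; first exact: sA.
have [_ _ /(_ _ (conj Vjs (sA _)))/sinj/(congr1 odd)] := VP j.*2.
by rewrite /= !odd_double.
Qed.

Lemma isolated_finite_trace {T : topologicalType} {A V : set T} {x : T} :
  accessible_space T -> A x -> open V -> V x -> finite_set (A `&` V) ->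
  isolated A x.
Proof.
move=> T1 Ax oV Vx AVfin; split; first exact: mem_set.
have xB : ~ (A `&` V `\` [set x]) x by case=> _; apply.
exists (V `\` (A `&` V `\` [set x])).
  apply: open_nbhs_nbhs; split=> //; rewrite setDE; apply: openI oV _.
  by rewrite openC; apply: (accessible_finite_set_closed.1 T1); exact: finite_setD.
apply/seteqP; split=> [y [[Vy nBy] Ay]|_ ->] //.
by apply: contrapT => yx; exact: nBy.
Qed.

Lemma open_unsplit_not_isolated_eq {T : topologicalType} (A : set T) :
  hausdorff_space T -> ~ (exists2 U, open U & splits U A) ->
  forall p q, (A `\` isolated A) p -> (A `\` isolated A) q -> p = q.
Proof.
move=> hT nosplit p q [Ap nip] [Aq niq]; apply: contrapT => /eqP pq.
have := hT; rewrite open_hausdorff => /(_ p q pq).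
move=> [[V1 V2] /= [/set_mem pV1 /set_mem qV2] [oV1 oV2 /eqP V12]].
have T1 := hausdorff_accessible hT.
have [AV1fin|AV1inf] := pselect (finite_set (A `&` V1)).
  by case: nip; exact: isolated_finite_trace T1 Ap oV1 pV1 AV1fin.
have [AV2fin|AV2inf] := pselect (finite_set (A `&` V2)).
  by case: niq; exact: isolated_finite_trace T1 Aq oV2 qV2 AV2fin.
apply: nosplit; exists V1 => //; split=> //.
apply: sub_infinite_set AV2inf => x [Ax V2x]; split=> // V1x.
by have : (V1 `&` V2) x by []; rewrite V12.
Qed.

Lemma hausdorff_open_split {T : topologicalType} (A : set T) :
  hausdorff_space T -> infinite_set A -> exists2 U, open U & splits U A.
Proof.
move=> hT Ainf; apply: contrapT => nosplit; apply/nosplit/open_split_isolated.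
have ADfin : finite_set (A `\` isolated A).
  have [[p Dp]|/nonemptyPn->] := pselect (A `\` isolated A !=set0); last first.
    exact: finite_set0.
  apply: sub_finite_set (finite_set1 p) => q Dq.
  exact: open_unsplit_not_isolated_eq hT nosplit _ _ Dq Dp.
apply: sub_infinite_set (infinite_setD Ainf ADfin).
by rewrite setDD; exact: subIsetr.
Qed.

Lemma infinite_cantor_space : infinite_set [set: cantor_space].
Proof.
apply/infinite_setP; exists (fun n m => m == n) => // m n /(congr1 (@^~ m)).
by rewrite eqxx => /esym/eqP.
Qed.

Theorem lemma2p4 :
  (exists F : set (set cantor_space), splitting_open_family F) /\
  (forall F : set (set cantor_space), splitting_open_family F -> ~ countable F).
Proof.
split.
  exists open; split=> // A.
  exact: hausdorff_open_split cantor_space_hausdorff.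
move=> F [_ Fsplit] /pcard_surjP[u Fu].
have [A Ainf Aunsplit] := seq_not_splitting u infinite_cantor_space.
have [U FU] := Fsplit A Ainf; have [n _ <-] := Fu U FU.
exact: Aunsplit.
Qed.
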